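(* Let $n\ge3$ and let $(X_1,\dots,X_n)$ be a stationary Markov chain on $\{0,1\}$ with transition probabilities $\Pr(X_{i+1}=1\mid X_i=0)=\frac{1}{n+1}$, $\Pr(X_{i+1}=1\mid X_i=1)=\frac{2}{n+1}$, and with each $X_i\sim\mathrm{Bernoulli}(1/n)$ (the stationary distribution). Let $S_n=\sum_{i=1}^nX_i$. Then $$D(P_{S_n}\,\|\,\mathrm{Po}(1))\le3\frac{\log n}{n}+\frac1n.$$
   Context: $\mathrm{Po}(1)$ is the Poisson distribution with mean 1; $D(P\|Q)=\sum_xP(x)\log\frac{P(x)}{Q(x)}$ is relative entropy with natural logarithm. *)

From mathcomp Require Import all_boot all_order all_algebra.
From mathcomp Require Import all_classical all_reals all_analysis.
Set Implicit Arguments. Unset Strict Implicit. Unset Printing Implicit Defensive.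
Import Order.TTheory GRing.Theory Num.Theory.
Local Open Scope ring_scope.

Section MC.
Variable R : realType.

Definition mc_trans (n : nat) (a b : bool) : R :=
  let p := if a then 2 / n.+1%:R else 1 / n.+1%:R in
  if b then p else 1 - p.

Definition mc_init (n : nat) (a : bool) : R :=
  if a then 1 / n%:R else 1 - 1 / n%:R.

Definition mc_joint (n : nat) (x : n.-tuple bool) : R :=
  mc_init n (nth false x 0) *
  \prod_(0 <= i < n.-1) mc_trans n (nth false x i) (nth false x i.+1).

Definition law_Sn (n k : nat) : R :=
  \sum_(x : n.-tuple bool | count id x == k) mc_joint x.

Definition poisson1 (k : nat) : R := expR (-1) / (k`!)%:R.

(* D(P_{S_n} || Po(1)) with natural log, convention 0 log 0 = 0;
   S_n takes values in {0,...,n} *)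
Definition relent_Sn_Po1 (n : nat) : R :=
  \sum_(k < n.+1)
    (if law_Sn n k == 0 then 0 else law_Sn n k * ln (law_Sn n k / poisson1 k)).

End MC.

From mathcomp Require Import all_boot all_order all_algebra.
From mathcomp Require Import all_classical all_reals all_analysis.
From mathcomp Require Import ring lra.
Import Order.TTheory GRing.Theory Num.Theory.
Local Open Scope ring_scope.

(* Compare the law P of (X_1, ..., X_n) with the weights Q x = e^-1 n^-|x|
   ([ref_law]), |x| being the number of ones of x.  On {S_n = k} these weights
   add up to e^-1 'C(n, k) / n^k <= e^-1 / k!, the Poisson(1) mass of k, so the
   log-sum inequality gives D(P_{S_n} || Po(1)) <= sum_x P x ln (P x / Q x).
   Every step of the chain contributes P(a, b) n^b <= n/(n+1) * 2^[a = b = 1],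
   hence ln (P x / Q x) <= 1 + (n-1) ln (n/(n+1)) + count11 x * ln 2, where
   count11 counts adjacent pairs of ones.  By stationarity
   E count11 = (n-1) * 2/(n(n+1)), and with ln (n/(n+1)) <= -1/(n+1) the
   expectation is at most (2 + 2 ln 2)/n; finally 1 + 2 ln 2 <= 3 ln 3 as e <= 4. *)

Section TupleBigops.
Context {T : finType} {V : Type} {idx : V} {op : Monoid.com_law idx}.

Lemma big_tuple0 (F : 0.-tuple T -> V) : \big[op/idx]_x F x = F [tuple].
Proof.
rewrite (eq_bigr (fun=> F [tuple])) => [|x _]; last by rewrite tuple0.
by rewrite big_const card_tuple expn0 /= Monoid.mulm1.
Qed.

Lemma big_tuple_rcons {m} (F : m.+1.-tuple T -> V) :
  \big[op/idx]_x F x = \big[op/idx]_(y : m.-tuple T) \big[op/idx]_b F [tuple of rcons y b].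
Proof.
have rcons_belast (x : m.+1.-tuple T) :
    rcons (belast (thead x) (behead x)) (last (thead x) (behead x)) = x.
  by rewrite -lastI {3}(tuple_eta x).
rewrite pair_bigA (reindex (fun p : m.-tuple T * T => [tuple of rcons p.1 p.2])) //=.
exists (fun x : m.+1.-tuple T =>
  ([tuple of belast (thead x) (behead x)], last (thead x) (behead x))) => [[y b]|x] _.
  have /rcons_inj[ey ->] := rcons_belast [tuple of rcons y b].
  by congr pair; apply: val_inj.
by apply: val_inj; rewrite /= rcons_belast.
Qed.

Lemma big_tuple1 (F : 1.-tuple T -> V) :
  \big[op/idx]_x F x = \big[op/idx]_b F [tuple b].
Proof.
by rewrite big_tuple_rcons big_tuple0; apply: eq_bigr => b _; congr F; apply: val_inj.
Qed.

End TupleBigops.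

Lemma big_adjacent_rcons (T V : Type) (idx : V) (op : Monoid.law idx)
    (f : T -> T -> V) (x0 : T) s b : (0 < size s)%N ->
  \big[op/idx]_(0 <= i < (size (rcons s b)).-1)
     f (nth x0 (rcons s b) i) (nth x0 (rcons s b) i.+1) =
  op (\big[op/idx]_(0 <= i < (size s).-1) f (nth x0 s i) (nth x0 s i.+1))
     (f (last x0 s) b).
Proof.
move=> s_gt0; have [k sizeE] : exists k, size s = k.+1 by exists (size s).-1; rewrite prednK.
rewrite size_rcons sizeE big_nat_recr //= !nth_rcons sizeE ltnSn ltnn eqxx.
rewrite -(nth_last x0) sizeE; congr (op _ _).
apply: eq_big_nat => i /andP[_ lt_i].
by rewrite !nth_rcons sizeE (ltn_trans lt_i) // ltnS lt_i.
Qed.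

Lemma card_count_tuple m k :
  #|[set x : m.-tuple bool | count id x == k]| = 'C(m, k).
Proof.
rewrite -sum1dep_card big_mkcond /=.
elim: m k => [|m IHm] k; first by rewrite big_tuple0 bin0n eq_sym.
rewrite big_tuple_rcons.
under eq_bigr => y _ do rewrite big_bool /= -!cats1 !count_cat /= !addn0 addn1.
case: k => [|k].
  by rewrite bin0 -[in RHS](bin0 m) -IHm; apply: eq_bigr => y _.
by rewrite big_split /= binS -!IHm addnC; congr (_ + _); apply: eq_bigr => y _.
Qed.

Lemma ffact_le_expn m k : (m ^_ k <= m ^ k)%N.
Proof.
elim: k => [|k IHk]; first by rewrite ffactn0.
by rewrite ffactnSr expnSr leq_mul // leq_subr.
Qed.

Section RealFacts.
Variable R : realType.

Lemma ln_ge1Bv {y : R} : 0 < y -> 1 - y^-1 <= ln y.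
Proof.
move=> y_gt0.
have : ln (1 + (y^-1 - 1)) <= y^-1 - 1.
  by apply: le_ln1Dx; rewrite ltrBrDr addNr invr_gt0.
rewrite addrC subrK lnV ?posrE //; lra.
Qed.

Lemma expR1_le4 : expR 1 <= 4 :> R.
Proof.
have sqrt_e_le2 : expR (1/2) <= 2 :> R.
  have := expR_ge1Dx (- (1/2) : R); rewrite expRN => h.
  have := ler_wpM2l (ltW (expR_gt0 (1/2 : R))) h.
  rewrite mulfV ?gt_eqF ?expR_gt0 //; lra.
have -> : 1 = 1/2 + 1/2 :> R by field.
rewrite expRD; apply: le_trans (ler_pM (expR_ge0 _) (expR_ge0 _) sqrt_e_le2 sqrt_e_le2) _; lra.
Qed.

Lemma log_sum_le {I : finType} {P : pred I} {a b : I -> R} :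
  (forall i, P i -> 0 < a i) -> (forall i, P i -> 0 < b i) ->
  0 < \sum_(i | P i) a i -> 0 < \sum_(i | P i) b i ->
  (\sum_(i | P i) a i) * ln ((\sum_(i | P i) a i) / (\sum_(i | P i) b i))
  <= \sum_(i | P i) a i * ln (a i / b i).
Proof.
set A := \sum_(i | P i) a i; set B := \sum_(i | P i) b i => a_gt0 b_gt0 A_gt0 B_gt0.
have sum0 : \sum_(i | P i) (a i - b i * (A / B)) = 0.
  by rewrite sumrB -mulr_suml -/A -/B mulrCA mulfV ?gt_eqF // mulr1 subrr.
rewrite -subr_ge0 mulr_suml -sumrB -[X in X <= _]sum0; apply: ler_sum => i Pi.
have ai_gt0 := a_gt0 i Pi; have bi_gt0 := b_gt0 i Pi.
rewrite -mulrBr -ln_div ?posrE ?divr_gt0 //.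
have := ln_ge1Bv (divr_gt0 (divr_gt0 ai_gt0 bi_gt0) (divr_gt0 A_gt0 B_gt0)).
move/(ler_wpM2l (ltW ai_gt0)); apply: le_trans.
by rewrite le_eqVlt; apply/orP; left; apply/eqP; field; rewrite !gt_eqF.
Qed.

Lemma log_sum_le_dominated (I : finType) (P : pred I) (a b : I -> R) (c : R) :
  (forall i, P i -> 0 < a i) -> (forall i, P i -> 0 < b i) ->
  \sum_(i | P i) b i <= c ->
  (if \sum_(i | P i) a i == 0 then 0
   else (\sum_(i | P i) a i) * ln ((\sum_(i | P i) a i) / c))
  <= \sum_(i | P i) a i * ln (a i / b i).
Proof.
move=> a_gt0 b_gt0 B_le_c.
have a_ge0 i : P i -> 0 <= a i by move/a_gt0/ltW.
have sum_gt0 (F : I -> R) j : P j -> (forall i, P i -> 0 < F i) -> 0 < \sum_(i | P i) F i.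
  move=> Pj F_gt0; rewrite (bigD1 j) //= ltr_pwDl ?F_gt0 // sumr_ge0 // => i /andP[+ _].
  by move/F_gt0/ltW.
case: eqP => [/(psumr_eq0P a_ge0) a0 | /(psumr_neq0P a_ge0) [j /andP[Pj _]]].
  by rewrite big1 // => i /a0 ->; rewrite mul0r.
have A_gt0 := sum_gt0 a j Pj a_gt0; have B_gt0 := sum_gt0 b j Pj b_gt0.
have c_gt0 := lt_le_trans B_gt0 B_le_c.
apply: le_trans (log_sum_le a_gt0 b_gt0 A_gt0 B_gt0).
apply: ler_wpM2l; first exact: ltW.
by rewrite ler_ln ?posrE ?divr_gt0 // ler_pM2l // lef_pV2.
Qed.

End RealFacts.

Section Chain.
Variables (R : realType) (n : nat).
Hypothesis n_ge3 : (3 <= n)%N.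
Local Notation N := (n%:R : R).
Local Notation T := (mc_trans R n).

Definition chain_law (s : seq bool) : R := mc_init R n (nth false s 0) *
  \prod_(0 <= i < (size s).-1) T (nth false s i) (nth false s i.+1).

Definition count11 (s : seq bool) : nat :=
  \sum_(0 <= i < (size s).-1) (nth false s i && nth false s i.+1).

Lemma chain_law_rcons s b : (0 < size s)%N ->
  chain_law (rcons s b) = chain_law s * T (last false s) b.
Proof.
by move=> s_gt0; rewrite /chain_law big_adjacent_rcons // nth_rcons s_gt0 mulrA.
Qed.

Lemma count11_rcons s b : (0 < size s)%N ->
  count11 (rcons s b) = (count11 s + (last false s && b))%N.
Proof.
move=> s_gt0; rewrite /count11.
by rewrite (@big_adjacent_rcons _ _ _ _ (fun a c : bool => a && c : nat)).
Qed.

Lemma natn_gt0 : 0 < N. Proof. by rewrite ltr0n (leq_trans _ n_ge3). Qed.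

Lemma natn_ge3 : 3 <= N. Proof. by rewrite (ler_nat R 3). Qed.

Lemma init_gt0 a : 0 < mc_init R n a.
Proof.
have := natn_ge3; case: a; rewrite /mc_init ?divr_gt0 ?natn_gt0 //.
by rewrite subr_gt0 ltr_pdivrMr ?natn_gt0 // mul1r; lra.
Qed.

Lemma trans_gt0 a b : 0 < T a b.
Proof.
have := natn_ge3; rewrite /mc_trans -natr1.
case: a; case: b; rewrite ?subr_gt0 ?divr_gt0 ?ltr_pdivrMr //; lra.
Qed.

Lemma chain_law_gt0 s : 0 < chain_law s.
Proof. by rewrite mulr_gt0 ?init_gt0 // prodr_gt0 // => i _; apply: trans_gt0. Qed.

Lemma init_stationary b :
  mc_init R n true * T true b + mc_init R n false * T false b = mc_init R n b.
Proof.
have := natn_gt0; rewrite /mc_init /mc_trans -natr1 => N_gt0.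
by case: b; field; rewrite ?paddr_eq0 ?oner_eq0 ?andbF // gt_eqF.
Qed.

Lemma sum_chain_law_last m b :
  \sum_(x : m.+1.-tuple bool) chain_law x * (last false x == b)%:R = mc_init R n b.
Proof.
elim: m b => [|m IHm] b.
  by rewrite big_tuple1 big_bool /chain_law /= !big_geq //; case: b => /=; ring.
rewrite big_tuple_rcons -init_stationary -!IHm !mulr_suml -big_split /=; apply: eq_bigr => y _.
rewrite big_bool /= !chain_law_rcons ?size_tuple // !last_rcons.
by case: (last false y); case: b => /=; ring.
Qed.

Lemma sum_chain_law m : \sum_(x : m.+1.-tuple bool) chain_law x = 1.
Proof.
have -> : 1 = mc_init R n true + mc_init R n false by rewrite /mc_init; ring.
rewrite -!(sum_chain_law_last m) -big_split /=; apply: eq_bigr => x _.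
by case: (last false x) => /=; ring.
Qed.

Lemma sum_chain_law_count11 m :
  \sum_(x : m.+1.-tuple bool) chain_law x * (count11 x)%:R =
  m%:R * (mc_init R n true * T true true).
Proof.
elim: m => [|m IHm].
  by rewrite big_tuple1 big_bool /count11 /= !big_geq //; ring.
rewrite big_tuple_rcons -natr1 mulrDl mul1r -IHm -(sum_chain_law_last m true).
rewrite mulr_suml -big_split /=.
apply: eq_bigr => y _; rewrite big_bool /= !chain_law_rcons ?size_tuple //.
rewrite !count11_rcons ?size_tuple //.
by case: (last false y) => /=; rewrite ?addn0 ?addn1 -?natr1 ?eqxx; ring.
Qed.

Lemma trans_le a b : T a b * N ^+ b <= N / (N + 1) * 2 ^+ (a && b).
Proof.
have N_ge3 := natn_ge3.
have : (N + 1)^-1 * (N + 1) = 1 by rewrite mulVf // gt_eqF //; lra.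
have : 0 <= (N + 1)^-1 by rewrite invr_ge0; lra.
case: a; case: b; rewrite /mc_trans /= -[n.+1%:R]natr1 ?expr0 ?expr1 ?mulr1.
all: move: (N + 1)^-1 => s; nra.
Qed.

Lemma chain_law_count_le s : (0 < size s)%N ->
  chain_law s * N ^+ count id s <= (N / (N + 1)) ^+ (size s).-1 * 2 ^+ count11 s.
Proof.
elim/last_ind: s => [//|s b IHs] _.
have [/eqP|s_gt0] := posnP (size s).
  rewrite size_eq0 => /eqP ->; rewrite /chain_law /count11 /= !big_geq //= mulr1 !expr0 mulr1.
  have := natn_gt0; case: b; rewrite /mc_init /= ?expr0 ?expr1 ?mulr1 => N_gt0.
    by rewrite mul1r mulVf ?gt_eqF.
  by rewrite gerBl divr_ge0 // ltW.
rewrite chain_law_rcons // count11_rcons // size_rcons -cats1 count_cat /= addn0.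
rewrite !exprD -(prednK s_gt0) exprSr /= mulrACA [X in _ <= X]mulrACA.
apply: ler_pM; last exact: trans_le.
- by rewrite mulr_ge0 ?exprn_ge0 ?ltW ?chain_law_gt0 ?natn_gt0.
- by rewrite mulr_ge0 ?exprn_ge0 ?ltW ?trans_gt0 ?natn_gt0.
- exact: IHs.
Qed.

Definition ref_law (s : seq bool) : R := expR (-1) / N ^+ count id s.

Lemma ref_law_gt0 s : 0 < ref_law s.
Proof. by rewrite divr_gt0 ?expR_gt0 ?exprn_gt0 ?natn_gt0. Qed.

Lemma sum_ref_law_le_poisson k :
  \sum_(x : n.-tuple bool | count id x == k) ref_law x <= poisson1 R k.
Proof.
rewrite (eq_bigr (fun=> expR (-1) / N ^+ k)) => [|x /eqP <-] //.
rewrite sumr_const -cardsE card_count_tuple /poisson1 -[_ *+ _]mulr_natr mulrAC -!mulrA.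
rewrite ler_pM2l ?expR_gt0 // ler_pdivrMr ?exprn_gt0 ?natn_gt0 // mulrC.
rewrite ler_pdivlMr ?ltr0n ?fact_gt0 // -natrX -natrM ler_nat.
by rewrite bin_ffact ffact_le_expn.
Qed.

Lemma relent_le_chain_relent :
  relent_Sn_Po1 R n <= \sum_(x : n.-tuple bool) chain_law x * ln (chain_law x / ref_law x).
Proof.
rewrite (partition_big (fun x : n.-tuple bool => inord (count id x) : 'I_n.+1) xpredT) //=.
apply: ler_sum => k _.
have countE (x : n.-tuple bool) : (inord (count id x) == k) = (count id x == k).
  by rewrite -val_eqE /= inordK // ltnS; have := count_size id x; rewrite size_tuple.
rewrite (eq_bigl (fun x : n.-tuple bool => count id x == k)) => [|x]; last exact: countE.
have -> : law_Sn R n k = \sum_(x : n.-tuple bool | count id x == k) chain_law x.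
  by apply: eq_bigr => x _; rewrite /mc_joint /chain_law size_tuple.
apply: log_sum_le_dominated => [x _|x _|]; [exact: chain_law_gt0|exact: ref_law_gt0|].
exact: sum_ref_law_le_poisson.
Qed.

Lemma ln_chain_ref_le (x : n.-tuple bool) :
  ln (chain_law x / ref_law x) <=
  1 + (n.-1)%:R * ln (N / (N + 1)) + (count11 x)%:R * ln 2.
Proof.
have ratio_gt0 : 0 < N / (N + 1) by rewrite divr_gt0 ?addr_gt0 ?natn_gt0.
have weight_gt0 := mulr_gt0 (chain_law_gt0 x) (exprn_gt0 (count id x) natn_gt0).
have -> : chain_law x / ref_law x = chain_law x * N ^+ count id x * expR 1.
  by rewrite /ref_law invf_div expRN invrK mulrA.
rewrite lnM ?posrE ?expR_gt0 // expRK.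
have := @chain_law_count_le x; rewrite size_tuple (ltn_trans _ n_ge3) // => /(_ isT).
rewrite -ler_ln ?posrE //; last by rewrite mulr_gt0 ?exprn_gt0.
move: (ln (chain_law x * N ^+ count id x)) => w.
rewrite lnM ?posrE ?exprn_gt0 // !lnXn // !mulr_natl; lra.
Qed.

Lemma chain_relent_le :
  \sum_(x : n.-tuple bool) chain_law x * ln (chain_law x / ref_law x) <=
  1 + (n.-1)%:R * ln (N / (N + 1)) + (n.-1)%:R * (mc_init R n true * T true true) * ln 2.
Proof.
have n_gt0 : (0 < n)%N by rewrite (ltn_trans _ n_ge3).
have mass := sum_chain_law n.-1; rewrite prednK // in mass.
have mean11 := sum_chain_law_count11 n.-1; rewrite prednK // in mean11.
set c := 1 + _ * _.
apply: le_trans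
  (_ : _ <= \sum_(x : n.-tuple bool) chain_law x * (c + (count11 x)%:R * ln 2)) _.
  apply: ler_sum => x _; apply: ler_wpM2l; first exact/ltW/chain_law_gt0.
  exact: ln_chain_ref_le.
rewrite le_eqVlt; apply/orP; left; apply/eqP.
under eq_bigr do rewrite mulrDr mulrA.
by rewrite big_split -!mulr_suml mass mean11 mul1r.
Qed.

Lemma one_add_2ln2_le : 1 + 2 * ln 2 <= 3 * ln N.
Proof.
have N_ge3 := natn_ge3.
have -> : 1 + 2 * ln 2 = ln (expR 1 * 2 ^+ 2) :> R.
  by rewrite lnM ?posrE ?expR_gt0 ?exprn_gt0 // expRK lnXn // mulr_natl.
rewrite -[3]/(3%:R) mulr_natl -lnXn ?natn_gt0 //.
rewrite ler_ln ?posrE ?mulr_gt0 ?expR_gt0 ?exprn_gt0 ?natn_gt0 //.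
apply: le_trans (_ : expR 1 * 2 ^+ 2 <= 3 ^+ 3) _.
  by have := expR1_le4 R; rewrite !exprS !expr0; lra.
by rewrite lerXn2r ?nnegrE //; lra.
Qed.

Lemma chain_relent_bound_le :
  1 + (n.-1)%:R * ln (N / (N + 1)) + (n.-1)%:R * (mc_init R n true * T true true) * ln 2
  <= 3 * (ln N / N) + 1 / N.
Proof.
have N_ge3 := natn_ge3; have N_gt0 := natn_gt0.
have N1_neq0 : N + 1 != 0 by rewrite gt_eqF //; lra.
have ME : (n.-1)%:R = N - 1 :> R.
  by rewrite -{2}(prednK (ltn_trans _ n_ge3 : 0 < n)%N) // -natr1 addrK.
have ln_ratio_le : ln (N / (N + 1)) <= - (N + 1)^-1.
  have -> : N / (N + 1) = 1 + - (N + 1)^-1 by field.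
  by apply: le_ln1Dx; rewrite ltrN2 invf_lt1; lra.
have ln2_ge0 : 0 <= ln 2 :> R by rewrite ln_ge0 //; lra.
have t_gt0 : 0 < N^-1 by rewrite invr_gt0.
have s_gt0 : 0 < (N + 1)^-1 by rewrite invr_gt0; lra.
have drift_le : (N - 1) * ln (N / (N + 1)) <= 2 * (N + 1)^-1 - 1.
  have -> : 2 * (N + 1)^-1 - 1 = (N - 1) * - (N + 1)^-1 by field.
  by apply: ler_wpM2l; first lra.
have pairs_le : (N - 1) * (1 / N * (2 / (N + 1))) * ln 2 <= 2 * N^-1 * ln 2.
  apply: ler_wpM2r => //; rewrite -subr_ge0.
  have -> : 2 * N^-1 - (N - 1) * (1 / N * (2 / (N + 1))) = 4 * (N^-1 * (N + 1)^-1).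
    by field; rewrite N1_neq0 gt_eqF.
  by rewrite mulr_ge0 // ltW // mulr_gt0.
have s_le_t : (N + 1)^-1 <= N^-1 by rewrite lef_pV2 ?posrE //; lra.
have := ler_wpM2l (ltW t_gt0) one_add_2ln2_le.
rewrite ME /mc_init /mc_trans /= -[n.+1%:R]natr1 mul1r; lra.
Qed.

End Chain.

Theorem mainTheorem13 (R : realType) (n : nat) (hn : (3 <= n)%N) :
  relent_Sn_Po1 R n <= 3 * (ln (n%:R : R) / n%:R) + 1 / n%:R.
Proof.
apply: le_trans (relent_le_chain_relent R n hn) _.
apply: le_trans (chain_relent_le R n hn) _.
exact: chain_relent_bound_le.
Qed.
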